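(* Let $\mathcal D$ be a strongly first-order class of dependency notions. Then every sentence of $\mathbf{FO}(\mathcal D,\sqcup)$ is equivalent to some first-order sentence, i.e. for every sentence $\phi$ of $\mathbf{FO}(\mathcal D,\sqcup)$ there is a first-order sentence $\phi'$ with $\mathfrak M\models_{\{\emptyset\}}\phi\iff\mathfrak M\models\phi'$ for all structures $\mathfrak M$.
   Context: Team semantics (lax version). For a structure $\mathfrak M$ with domain $M$, a team $X$ is a (possibly empty) set of assignments $s:V\to M$, $V$ a finite set of variables; $X(\vec v)=\{s(\vec v):s\in X\}$. Satisfaction for formulas in negation normal form: first-order literal $\alpha$: every $s\in X$ satisfies $\alpha$ (Tarski); $\psi\vee\theta$: $X=Y\cup Z$ with $\mathfrak M\models_Y\psi$, $\mathfrak M\models_Z\theta$; $\psi\wedge\theta$: both; $\exists v\psi$: some $F:X\to\mathcal P(M)\setminus\{\emptyset\}$ with $\mathfrak M\models_{X[F/v]}\psi$, $X[F/v]=\{s[m/v]:s\in X,m\in F(s)\}$; $\forall v\psi$: $\mathfrak M\models_{X[M/v]}\psi$, $X[M/v]=\{s[m/v]:s\in X,m\in M\}$. A $k$-ary dependency notion $\mathbf D$ is an isomorphism-closed class of structures $(M,R)$, $R$ $k$-ary; $\mathfrak M\models_X\mathbf D\vec v$ iff $(M,X(\vec v))\in\mathbf D$. A class $\mathcal D$ is strongly first-order if every sentence $\phi$ of $\mathbf{FO}(\mathcal D)$ has a first-order sentence $\phi'$ with $\mathfrak M\models_{\{\emptyset\}}\phi\iff\mathfrak M\models\phi'$ for all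 $\mathfrak M$. Classical disjunction: $\mathfrak M\models_X\phi\sqcup\psi$ iff $\mathfrak M\models_X\phi$ or $\mathfrak M\models_X\psi$. *)

From Stdlib Require Import List.
Import ListNotations.

(* Relational vocabulary (with equality); relation symbols are interpreted
   as predicates on tuples (lists). *)
Record signature : Type := { rel_sym : Type }.

Record structure (L : signature) : Type := {
  dom :> Type;
  dom_inhabited : inhabited dom;
  interp : rel_sym L -> list dom -> Prop }.
Arguments dom {L}.
Arguments interp {L}.

(* A k-ary dependency notion: an isomorphism-closed class of structures
   (M, R) with R a k-ary relation on M (tuples represented as lists). *)
Record dep_notion (k : nat) : Type := {
  dn_holds : forall M : Type, (list M -> Prop) -> Prop;
  dn_kary : forall (M : Type) (R : list M -> Prop),
      dn_holds M R -> forall t, R t -> length t = k;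
  dn_iso : forall (M N : Type) (f : M -> N) (g : N -> M),
      (forall x, g (f x) = x) -> (forall y, f (g y) = y) ->
      forall R : list M -> Prop,
        dn_holds M R <-> dn_holds N (fun t => exists u, R u /\ map f u = t) }.
Arguments dn_holds {k}.

Record dep_class : Type := {
  dc_idx : Type;
  dc_arity : dc_idx -> nat;
  dc_notion : forall i : dc_idx, dep_notion (dc_arity i) }.

(* Formulas of FO(D, ⊔) in negation normal form; variables are nats. *)
Inductive formula (L : signature) (C : dep_class) : Type :=
| FEq  : nat -> nat -> formula L C
| FNeq : nat -> nat -> formula L C
| FRel : rel_sym L -> list nat -> formula L C
| FNRel : rel_sym L -> list nat -> formula L C
| FDep : dc_idx C -> list nat -> formula L C
| FAnd : formula L C -> formula L C -> formula L C
| FOr  : formula L C -> formula L C -> formula L C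
| FCor : formula L C -> formula L C -> formula L C
| FEx  : nat -> formula L C -> formula L C
| FAll : nat -> formula L C -> formula L C.
Arguments FEq {L C}. Arguments FNeq {L C}. Arguments FRel {L C}.
Arguments FNRel {L C}. Arguments FDep {L C}. Arguments FAnd {L C}.
Arguments FOr {L C}. Arguments FCor {L C}. Arguments FEx {L C}.
Arguments FAll {L C}.

Inductive fo (L : signature) : Type :=
| OEq  : nat -> nat -> fo L
| ONeq : nat -> nat -> fo L
| ORel : rel_sym L -> list nat -> fo L
| ONRel : rel_sym L -> list nat -> fo L
| OAnd : fo L -> fo L -> fo L
| OOr  : fo L -> fo L -> fo L
| OEx  : nat -> fo L -> fo L
| OAll : nat -> fo L -> fo L.
Arguments OEq {L}. Arguments ONeq {L}. Arguments ORel {L}. Arguments ONRel {L}.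
Arguments OAnd {L}. Arguments OOr {L}. Arguments OEx {L}. Arguments OAll {L}.

Fixpoint fv {L C} (φ : formula L C) : list nat :=
  match φ with
  | FEq x y | FNeq x y => [x; y]
  | FRel _ xs | FNRel _ xs | FDep _ xs => xs
  | FAnd a b | FOr a b | FCor a b => fv a ++ fv b
  | FEx v a | FAll v a => filter (fun x => negb (Nat.eqb x v)) (fv a)
  end.

Fixpoint fo_fv {L} (φ : fo L) : list nat :=
  match φ with
  | OEq x y | ONeq x y => [x; y]
  | ORel _ xs | ONRel _ xs => xs
  | OAnd a b | OOr a b => fo_fv a ++ fo_fv b
  | OEx v a | OAll v a => filter (fun x => negb (Nat.eqb x v)) (fo_fv a)
  end.

Fixpoint dep_wf {L C} (φ : formula L C) : Prop :=
  match φ with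
  | FDep i xs => length xs = dc_arity C i
  | FAnd a b | FOr a b | FCor a b => dep_wf a /\ dep_wf b
  | FEx _ a | FAll _ a => dep_wf a
  | _ => True
  end.

Fixpoint no_cor {L C} (φ : formula L C) : Prop :=
  match φ with
  | FCor _ _ => False
  | FAnd a b | FOr a b => no_cor a /\ no_cor b
  | FEx _ a | FAll _ a => no_cor a
  | _ => True
  end.

Definition sentence {L C} (φ : formula L C) : Prop := fv φ = [] /\ dep_wf φ.
Definition fo_sentence {L} (φ : fo L) : Prop := fo_fv φ = [].

(* Assignments: partial maps with (finite) domain; teams: sets of assignments. *)
Definition assignment (M : Type) := nat -> option M.
Definition team (M : Type) := assignment M -> Prop.

Definition update {M} (s : assignment M) (v : nat) (m : M) : assignment M :=
  fun n => if Nat.eqb n v then Some m else s n.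

Fixpoint vals {M} (s : assignment M) (xs : list nat) : option (list M) :=
  match xs with
  | [] => Some []
  | x :: xs' =>
      match s x, vals s xs' with
      | Some a, Some t => Some (a :: t)
      | _, _ => None
      end
  end.

Definition team_rel {M} (X : team M) (xs : list nat) : list M -> Prop :=
  fun t => exists s, X s /\ vals s xs = Some t.

Definition empty_team (M : Type) : team M := fun s => forall n, s n = None.
Definition empty_asg (M : Type) : assignment M := fun _ => None.

Fixpoint fo_sat {L} (M : structure L) (s : assignment M) (φ : fo L) : Prop :=
  match φ with
  | OEq x y => exists a, s x = Some a /\ s y = Some a
  | ONeq x y => exists a b, s x = Some a /\ s y = Some b /\ a <> b
  | ORel r xs => exists t, vals s xs = Some t /\ interp M r t
  | ONRel r xs => exists t, vals s xs = Some t /\ ~ interp M r t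
  | OAnd a b => fo_sat M s a /\ fo_sat M s b
  | OOr a b => fo_sat M s a \/ fo_sat M s b
  | OEx v a => exists m : M, fo_sat M (update s v m) a
  | OAll v a => forall m : M, fo_sat M (update s v m) a
  end.

(* Lax team semantics. *)
Fixpoint tsat {L C} (M : structure L) (φ : formula L C) (X : team M) : Prop :=
  match φ with
  | FEq x y => forall s, X s -> exists a, s x = Some a /\ s y = Some a
  | FNeq x y => forall s, X s -> exists a b, s x = Some a /\ s y = Some b /\ a <> b
  | FRel r xs => forall s, X s -> exists t, vals s xs = Some t /\ interp M r t
  | FNRel r xs => forall s, X s -> exists t, vals s xs = Some t /\ ~ interp M r t
  | FDep i xs => dn_holds (dc_notion C i) (dom M) (team_rel X xs)
  | FAnd a b => tsat M a X /\ tsat M b X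
  | FOr a b => exists Y Z : team M,
      (forall s, X s <-> (Y s \/ Z s)) /\ tsat M a Y /\ tsat M b Z
  | FCor a b => tsat M a X \/ tsat M b X
  | FEx v a => exists F : assignment M -> M -> Prop,
      (forall s, X s -> exists m, F s m) /\
      tsat M a (fun s' => exists s m, X s /\ F s m /\ s' = update s v m)
  | FAll v a =>
      tsat M a (fun s' => exists s (m : M), X s /\ s' = update s v m)
  end.

Definition strongly_first_order (C : dep_class) : Prop :=
  forall (L : signature) (φ : formula L C),
    no_cor φ -> sentence φ ->
    exists φ' : fo L, fo_sentence φ' /\
      forall M : structure L, tsat M φ (empty_team M) <-> fo_sat M (empty_asg M) φ'.

From Stdlib Require Import List.
Import ListNotations.

(* In lax team semantics the classical disjunction commutes with every other
   connective and quantifier: for instance X satisfies ∃v (φ ⊔ ψ) iff it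
   satisfies ∃v φ or ∃v ψ, because a lax choice function for φ ⊔ ψ is already
   one for φ or for ψ.  Pushing ⊔ to the top therefore turns every sentence of
   FO(D, ⊔) into a finite classical disjunction of FO(D)-sentences; each of
   these is first-order by strong first-orderness, and a finite disjunction of
   first-order sentences is first-order. *)

Definition map_prod {A B C} (f : A -> B -> C) (l1 : list A) (l2 : list B) : list C :=
  map (fun p => f (fst p) (snd p)) (list_prod l1 l2).

Lemma in_map_prod {A B C} (f : A -> B -> C) l1 l2 z :
  In z (map_prod f l1 l2) <-> exists x y, In x l1 /\ In y l2 /\ z = f x y.
Proof.
  unfold map_prod; rewrite in_map_iff; split.
  - intros [[x y] [<- Hxy]]; apply in_prod_iff in Hxy; exists x, y; tauto.
  - intros [x [y [Hx [Hy ->]]]]; exists (x, y); split; [reflexivity | now apply in_prod].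
Qed.

Fixpoint cor_disjuncts {L C} (φ : formula L C) : list (formula L C) :=
  match φ with
  | FAnd a b => map_prod FAnd (cor_disjuncts a) (cor_disjuncts b)
  | FOr a b => map_prod FOr (cor_disjuncts a) (cor_disjuncts b)
  | FCor a b => cor_disjuncts a ++ cor_disjuncts b
  | FEx v a => map (FEx v) (cor_disjuncts a)
  | FAll v a => map (FAll v) (cor_disjuncts a)
  | _ => [φ]
  end.

Section CorDisjuncts.

Context {L : signature} {C : dep_class}.

Lemma cor_disjuncts_no_cor (φ ψ : formula L C) :
  In ψ (cor_disjuncts φ) -> no_cor ψ.
Proof.
  revert ψ; induction φ; simpl; intros ψ Hψ;
    try (destruct Hψ as [<- | []]; exact I).
  - apply in_map_prod in Hψ as [x [y [Hx [Hy ->]]]]; split; auto.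
  - apply in_map_prod in Hψ as [x [y [Hx [Hy ->]]]]; split; auto.
  - apply in_app_or in Hψ as [Hψ | Hψ]; auto.
  - apply in_map_iff in Hψ as [x [<- Hx]]; simpl; auto.
  - apply in_map_iff in Hψ as [x [<- Hx]]; simpl; auto.
Qed.

Lemma cor_disjuncts_fv (φ ψ : formula L C) :
  In ψ (cor_disjuncts φ) -> incl (fv ψ) (fv φ).
Proof.
  revert ψ; induction φ; simpl; intros ψ Hψ;
    try (destruct Hψ as [<- | []]; apply incl_refl).
  - apply in_map_prod in Hψ as [x [y [Hx [Hy ->]]]]; apply incl_app_app; auto.
  - apply in_map_prod in Hψ as [x [y [Hx [Hy ->]]]]; apply incl_app_app; auto.
  - apply in_app_or in Hψ as [Hψ | Hψ]; [apply incl_appl | apply incl_appr]; auto.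
  - apply in_map_iff in Hψ as [x [<- Hx]]; intros z Hz; simpl in *.
    apply filter_In in Hz as [Hz Hzn]; apply filter_In; split; auto.
    exact (IHφ x Hx z Hz).
  - apply in_map_iff in Hψ as [x [<- Hx]]; intros z Hz; simpl in *.
    apply filter_In in Hz as [Hz Hzn]; apply filter_In; split; auto.
    exact (IHφ x Hx z Hz).
Qed.

Lemma cor_disjuncts_dep_wf (φ ψ : formula L C) :
  dep_wf φ -> In ψ (cor_disjuncts φ) -> dep_wf ψ.
Proof.
  revert ψ; induction φ; simpl; intros ψ Hwf Hψ;
    try (destruct Hψ as [<- | []]; exact Hwf).
  - destruct Hwf; apply in_map_prod in Hψ as [x [y [Hx [Hy ->]]]]; split; auto.
  - destruct Hwf; apply in_map_prod in Hψ as [x [y [Hx [Hy ->]]]]; split; auto.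
  - destruct Hwf; apply in_app_or in Hψ as [Hψ | Hψ]; auto.
  - apply in_map_iff in Hψ as [x [<- Hx]]; simpl; auto.
  - apply in_map_iff in Hψ as [x [<- Hx]]; simpl; auto.
Qed.

Lemma cor_disjuncts_sentence (φ ψ : formula L C) :
  sentence φ -> In ψ (cor_disjuncts φ) -> no_cor ψ /\ sentence ψ.
Proof.
  intros [Hfv Hwf] Hψ; split; [exact (cor_disjuncts_no_cor φ ψ Hψ) | split].
  - apply incl_l_nil; rewrite <- Hfv; exact (cor_disjuncts_fv φ ψ Hψ).
  - exact (cor_disjuncts_dep_wf φ ψ Hwf Hψ).
Qed.

Lemma tsat_cor_disjuncts (M : structure L) (φ : formula L C) (X : team M) :
  tsat M φ X <-> exists ψ, In ψ (cor_disjuncts φ) /\ tsat M ψ X.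
Proof.
  revert X; induction φ; simpl; intros X;
    try (split; [intros H; eexists; split; [left; reflexivity | exact H]
                | intros [ψ [[<- | []] H]]; exact H]).
  - rewrite IHφ1, IHφ2; split.
    + intros [[x [Hx Ha]] [y [Hy Hb]]].
      exists (FAnd x y); split; [apply in_map_prod; eauto | split; assumption].
    + intros [ψ [Hψ H]]; apply in_map_prod in Hψ as [x [y [Hx [Hy ->]]]].
      destruct H; split; eauto.
  - split.
    + intros [Y [Z [HX [Ha Hb]]]].
      apply IHφ1 in Ha as [x [Hx Ha]]; apply IHφ2 in Hb as [y [Hy Hb]].
      exists (FOr x y); split; [apply in_map_prod; eauto | exists Y, Z; auto].
    + intros [ψ [Hψ H]]; apply in_map_prod in Hψ as [x [y [Hx [Hy ->]]]].
      destruct H as [Y [Z [HX [Ha Hb]]]].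
      exists Y, Z; split; [exact HX | split; [apply IHφ1 | apply IHφ2]; eauto].
  - rewrite IHφ1, IHφ2; split.
    + intros [[x [Hx H]] | [x [Hx H]]]; exists x; split; auto; apply in_or_app; auto.
    + intros [x [Hx H]]; apply in_app_or in Hx as [Hx | Hx]; [left | right]; eauto.
  - split.
    + intros [F [HF H]]; apply IHφ in H as [x [Hx H]].
      exists (FEx n x); split; [apply in_map; exact Hx | exists F; auto].
    + intros [ψ [Hψ H]]; apply in_map_iff in Hψ as [x [<- Hx]].
      destruct H as [F [HF H]]; exists F; split; [exact HF | apply IHφ; eauto].
  - rewrite IHφ; split.
    + intros [x [Hx H]]; exists (FAll n x); split; [apply in_map; exact Hx | exact H].
    + intros [ψ [Hψ H]]; apply in_map_iff in Hψ as [x [<- Hx]]; eauto.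
Qed.

End CorDisjuncts.

Definition fo_definable {L} (K : structure L -> Prop) : Prop :=
  exists φ' : fo L, fo_sentence φ' /\ forall M : structure L, K M <-> fo_sat M (empty_asg M) φ'.

Section FODefinable.

Context {L : signature}.

Lemma fo_definable_false : fo_definable (fun _ : structure L => False).
Proof.
  exists (OAll 0 (ONeq 0 0)); split; [reflexivity | intros M; split; [contradiction |]].
  intros H; destruct (dom_inhabited _ M) as [m].
  destruct (H m) as [a [b [Ha [Hb Hab]]]]; cbn in Ha, Hb; congruence.
Qed.

Lemma fo_definable_or (K1 K2 : structure L -> Prop) :
  fo_definable K1 -> fo_definable K2 -> fo_definable (fun M => K1 M \/ K2 M).
Proof.
  intros [φ1 [Hs1 H1]] [φ2 [Hs2 H2]]; exists (OOr φ1 φ2); split.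
  - unfold fo_sentence in *; simpl; rewrite Hs1, Hs2; reflexivity.
  - intros M; simpl; rewrite H1, H2; reflexivity.
Qed.

Lemma fo_definable_ext (K1 K2 : structure L -> Prop) :
  (forall M, K1 M <-> K2 M) -> fo_definable K1 -> fo_definable K2.
Proof.
  intros HK [φ' [Hs H]]; exists φ'; split; [exact Hs | intros M; rewrite <- HK; apply H].
Qed.

Lemma fo_definable_exists_in {A} (l : list A) (K : A -> structure L -> Prop) :
  (forall a, In a l -> fo_definable (K a)) ->
  fo_definable (fun M => exists a, In a l /\ K a M).
Proof.
  induction l as [| a l IH]; intros Hl.
  - apply (fo_definable_ext (fun _ => False)); [firstorder | exact fo_definable_false].
  - apply (fo_definable_ext (fun M => K a M \/ exists b, In b l /\ K b M)).
    + intros M; split.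
      * intros [H | [b [Hb H]]]; [exists a | exists b]; simpl; auto.
      * intros [b [[<- | Hb] H]]; eauto.
    + apply fo_definable_or; [apply Hl; left; reflexivity |].
      apply IH; intros b Hb; apply Hl; right; exact Hb.
Qed.

End FODefinable.

Theorem mainTheorem19 (C : dep_class) :
  strongly_first_order C ->
  forall (L : signature) (φ : formula L C),
    sentence φ ->
    exists φ' : fo L, fo_sentence φ' /\
      forall M : structure L, tsat M φ (empty_team M) <-> fo_sat M (empty_asg M) φ'.
Proof.
  intros Hsfo L φ Hφ.
  change (fo_definable (fun M => tsat M φ (empty_team M))).
  apply (fo_definable_ext
           (fun M => exists ψ, In ψ (cor_disjuncts φ) /\ tsat M ψ (empty_team M))).
  - intros M; symmetry; apply tsat_cor_disjuncts.
  - apply fo_definable_exists_in; intros ψ Hψ.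
    destruct (cor_disjuncts_sentence φ ψ Hφ Hψ) as [Hno Hsent].
    exact (Hsfo L ψ Hno Hsent).
Qed.
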